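(* There exist a Hopf algebra ${\cal B}$ and a right ${\cal B}$-comodule algebra $({\cal E},\rho)$ such that: (1) the algebra of coinvariants ${\cal E}^{{\rm co}{\cal B}}$ is commutative (and can be chosen to be the polynomial ring ${\bf k}[u]$); (2) ${\cal E}$ is isomorphic to a smash product ${\cal E}^{{\rm co}{\cal B}}\sharp{\cal B}$ with coaction ${\rm id}\otimes\Delta$; (3) there is a multiplicative set $U\subset{\cal E}^{{\rm co}{\cal B}}$ such that there is no pair consisting of a $\rho$-compatible left Ore set $S\subset{\cal E}$ and an algebra isomorphism $\zeta:(S^{-1}{\cal E})^{{\rm co}{\cal B}}\to U^{-1}({\cal E}^{{\rm co}{\cal B}})$ with $\zeta\circ i_S|_{{\cal E}^{{\rm co}{\cal B}}}=i_U$.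
   Context: A right ${\cal B}$-comodule algebra is an associative unital algebra with a right ${\cal B}$-coaction that is an algebra map. A left Ore set $S$ in ${\cal E}$ is $\rho$-compatible if there is a unique map $\rho_S$ making $S^{-1}{\cal E}$ a right ${\cal B}$-comodule algebra with $\rho_S\circ i_S=(i_S\otimes{\rm id})\circ\rho$, and $(S^{-1}{\cal E})^{{\rm co}{\cal B}}$ denotes the coinvariants of $\rho_S$. Smash product $V\sharp{\cal B}$: $V\otimes{\cal B}$ with product $(v\otimes b)(v'\otimes b')=\sum v(b_{(1)}\rhd v')\otimes b_{(2)}b'$ for a ${\cal B}$-module algebra action $\rhd$ on $V$. *)

(* Hopf algebras, comodule algebras, smash products and
   Ore localizations over a field k, with tensor products V (x) W of
   k-vector spaces represented setoid-style: a tensor is a finite formal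
   sum [seq (v_i, w_i)] of pure tensors, and two such sums are EQUAL in
   V (x) W iff every bilinear map out of V x W (into any k-module M)
   takes the same value on them (this is exactly the kernel of the
   canonical surjection onto the tensor product, by its universal
   property).  A linear map X -> V (x) W is given by choosing a
   representative for every image (Sweedler notation). *)
From HB Require Import structures.
From mathcomp Require Import all_boot all_order all_algebra.
Set Implicit Arguments. Unset Strict Implicit. Unset Printing Implicit Defensive.
Import GRing.Theory.
Local Open Scope ring_scope.

Section Tensors.
Variable k : fieldType.

Definition bilin (V W M : lmodType k) (f : V -> W -> M) : Prop :=
  (forall (a : k) v1 v2 w, f (a *: v1 + v2) w = a *: f v1 w + f v2 w) /\
  (forall (a : k) v w1 w2, f v (a *: w1 + w2) = a *: f v w1 + f v w2).

Definition trilin (U V W M : lmodType k) (f : U -> V -> W -> M) : Prop :=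
  [/\ (forall (a : k) u1 u2 v w, f (a *: u1 + u2) v w = a *: f u1 v w + f u2 v w),
      (forall (a : k) u v1 v2 w, f u (a *: v1 + v2) w = a *: f u v1 w + f u v2 w) &
      (forall (a : k) u v w1 w2, f u v (a *: w1 + w2) = a *: f u v w1 + f u v w2)].

Definition teq2 (V W : lmodType k) (s t : seq (V * W)) : Prop :=
  forall (M : lmodType k) (f : V -> W -> M), bilin f ->
    \sum_(p <- s) f p.1 p.2 = \sum_(p <- t) f p.1 p.2.

Definition teq3 (U V W : lmodType k) (s t : seq (U * V * W)) : Prop :=
  forall (M : lmodType k) (f : U -> V -> W -> M), trilin f ->
    \sum_(p <- s) f p.1.1 p.1.2 p.2 = \sum_(p <- t) f p.1.1 p.1.2 p.2.

Definition tscale (V W : lmodType k) (a : k) (s : seq (V * W)) : seq (V * W) :=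
  [seq (a *: p.1, p.2) | p <- s].

Section Hopf.
Variable B : algType k.
Variables (D : B -> seq (B * B)) (eps : B -> k) (S : B -> B).

Definition Delta_algmap : Prop :=
  [/\ (forall (a : k) x y, teq2 (D (a *: x + y)) (tscale a (D x) ++ D y)),
      (forall x y, teq2 (D (x * y)) [seq (p.1 * q.1, p.2 * q.2) | p <- D x, q <- D y]) &
      teq2 (D 1) [:: (1, 1)]].

Definition coassociative : Prop :=
  forall x, teq3 [seq (q.1, q.2, p.2) | p <- D x, q <- D p.1]
                 [seq (p.1, q.1, q.2) | p <- D x, q <- D p.2].

Definition eps_algmap : Prop :=
  [/\ (forall (a : k) x y, eps (a *: x + y) = a * eps x + eps y),
      (forall x y, eps (x * y) = eps x * eps y) & eps 1 = 1].

Definition counital : Prop :=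
  forall x, \sum_(p <- D x) eps p.1 *: p.2 = x /\ \sum_(p <- D x) eps p.2 *: p.1 = x.

Definition antipode_ax : Prop :=
  (forall (a : k) x y, S (a *: x + y) = a *: S x + S y) /\
  (forall x, \sum_(p <- D x) S p.1 * p.2 = (eps x)%:A /\
             \sum_(p <- D x) p.1 * S p.2 = (eps x)%:A).

Definition is_hopf : Prop :=
  [/\ Delta_algmap, coassociative, eps_algmap, counital & antipode_ax].
End Hopf.

Section Comod.
Variables (B : algType k) (D : B -> seq (B * B)) (eps : B -> k).
Variables (E : algType k) (rho : E -> seq (E * B)).

Definition is_comod_alg : Prop :=
  [/\ (forall (a : k) x y, teq2 (rho (a *: x + y)) (tscale a (rho x) ++ rho y)),
      (forall x y, teq2 (rho (x * y)) [seq (p.1 * q.1, p.2 * q.2) | p <- rho x, q <- rho y]),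
      teq2 (rho 1) [:: (1, 1)],
      (forall e, teq3 [seq (q.1, q.2, p.2) | p <- rho e, q <- rho p.1]
                      [seq (p.1, q.1, q.2) | p <- rho e, q <- D p.2]) &
      (forall e, \sum_(p <- rho e) eps p.2 *: p.1 = e)].

Definition coinv (e : E) : Prop := teq2 (rho e) [:: (e, 1)].
End Comod.

Definition commutative_on (E : algType k) (V : E -> Prop) : Prop :=
  forall x y, V x -> V y -> x * y = y * x.

Definition poly_iso (E : algType k) (V : E -> Prop) : Prop :=
  exists psi : {poly k} -> E,
    [/\ (forall (a : k) p q, psi (a *: p + q) = a *: psi p + psi q),
        (forall p q, psi (p * q) = psi p * psi q), psi 1 = 1,
        injective psi & (forall e, V e <-> exists p, e = psi p)].

Definition alg_iso_on (L : algType k) (A : algType k) (V : L -> Prop) (zeta : L -> A) : Prop :=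
  [/\ (forall (a : k) x y, V x -> V y -> zeta (a *: x + y) = a *: zeta x + zeta y),
      (forall x y, V x -> V y -> zeta (x * y) = zeta x * zeta y), zeta 1 = 1,
      (forall x y, V x -> V y -> zeta x = zeta y -> x = y) &
      (forall z, exists x, V x /\ zeta x = z)].

Section Smash.
Variables (B : algType k) (D : B -> seq (B * B)) (eps : B -> k).
Variables (E : algType k) (V : E -> Prop).

Definition module_alg (act : B -> E -> E) : Prop :=
  [/\ (forall b v, V v -> V (act b v)),
      (forall (a : k) b1 b2 v, V v -> act (a *: b1 + b2) v = a *: act b1 v + act b2 v),
      (forall (a : k) b v1 v2, V v1 -> V v2 -> act b (a *: v1 + v2) = a *: act b v1 + act b v2),
      (forall b c v, V v -> act (b * c) v = act b (act c v)) &
      [/\ (forall v, V v -> act 1 v = v),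
          (forall b v w, V v -> V w -> act b (v * w) = \sum_(p <- D b) act p.1 v * act p.2 w) &
          (forall b, act b 1 = (eps b)%:A)]].

(* phi : V (x) B -> E (given by its bilinear values on pure tensors) is an
   isomorphism of k-algebras from the smash product V # B onto E, which
   intertwines the coaction id (x) Delta of V # B with rho. *)
Definition smash_iso (rho : E -> seq (E * B)) (act : B -> E -> E) (phi : E -> B -> E) : Prop :=
  [/\
      (forall (a : k) v1 v2 b, V v1 -> V v2 -> phi (a *: v1 + v2) b = a *: phi v1 b + phi v2 b)
      /\ (forall (a : k) v b1 b2, V v -> phi v (a *: b1 + b2) = a *: phi v b1 + phi v b2),
      (forall e, exists s : seq (E * B), (forall p, p \in s -> V p.1) /\
                   e = \sum_(p <- s) phi p.1 p.2),
      (forall s t : seq (E * B), (forall p, p \in s -> V p.1) -> (forall p, p \in t -> V p.1) ->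
          \sum_(p <- s) phi p.1 p.2 = \sum_(p <- t) phi p.1 p.2 -> teq2 s t),
      (forall v b v' b', V v -> V v' ->
          phi v b * phi v' b' = \sum_(p <- D b) phi (v * act p.1 v') (p.2 * b'))
      /\ phi 1 1 = 1 &
      (forall v b, V v -> teq2 (rho (phi v b)) [seq (phi v p.1, p.2) | p <- D b])].

Definition smash_decomposition (rho : E -> seq (E * B)) : Prop :=
  exists act : B -> E -> E, module_alg act /\ exists phi, smash_iso rho act phi.
End Smash.

Definition mult_subset (E : algType k) (V U : E -> Prop) : Prop :=
  [/\ (forall u, U u -> V u), U 1 & (forall x y, U x -> U y -> U (x * y))].

Definition comm_localization (E : algType k) (V U : E -> Prop) (Lu : comAlgType k)
    (iU : E -> Lu) : Prop :=
  [/\ (forall (a : k) x y, V x -> V y -> iU (a *: x + y) = a *: iU x + iU y),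
      (forall x y, V x -> V y -> iU (x * y) = iU x * iU y), iU 1 = 1,
      (forall u, U u -> exists w, iU u * w = 1) &
      [/\ (forall l, exists v u, [/\ V v, U u & l * iU u = iU v]) &
          (forall v, V v -> iU v = 0 <-> exists u, U u /\ u * v = 0)]].

Definition left_ore (E : algType k) (S : E -> Prop) : Prop :=
  [/\ S 1, (forall x y, S x -> S y -> S (x * y)),
      (forall s a, S s -> exists s' a', S s' /\ s' * a = a' * s) &
      (forall s a, S s -> a * s = 0 -> exists s', S s' /\ s' * a = 0)].

Definition left_fractions (E : algType k) (S : E -> Prop) (L : algType k) (iS : E -> L) : Prop :=
  [/\ (forall (a : k) x y, iS (a *: x + y) = a *: iS x + iS y),
      (forall x y, iS (x * y) = iS x * iS y), iS 1 = 1,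
      (forall s, S s -> exists w, w * iS s = 1 /\ iS s * w = 1) &
      [/\ (forall l, exists s a, [/\ S s & iS s * l = iS a]) &
          (forall a, iS a = 0 <-> exists s, S s /\ s * a = 0)]].

Section Compat.
Variables (B : algType k) (D : B -> seq (B * B)) (eps : B -> k).
Variables (E : algType k) (rho : E -> seq (E * B)).
Variables (L : algType k) (iS : E -> L).

Definition compatible_coaction (rhoS : L -> seq (L * B)) : Prop :=
  is_comod_alg D eps rhoS /\
  forall e, teq2 (rhoS (iS e)) [seq (iS p.1, p.2) | p <- rho e].

Definition rho_compatible : Prop :=
  exists rhoS, compatible_coaction rhoS /\
    forall rhoS', compatible_coaction rhoS' -> forall l, teq2 (rhoS' l) (rhoS l).
End Compat.

End Tensors.

From HB Require Import structures.
From mathcomp Require Import all_boot all_order all_algebra.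
From mathcomp Require Import ring.
From mathcomp Require boolp.
Set Implicit Arguments. Unset Strict Implicit. Unset Printing Implicit Defensive.
Import GRing.Theory.
Local Open Scope ring_scope.

(* Take B = k[Z/2] and E = k[u] # Z/2, where the generator g acts by
   u |-> 1 - u and the coaction is x + y g |-> x (x) 1 + y g (x) g.  The
   coinvariants are k[u]; let U = {u^n}.  In a comodule algebra the two-sided
   inverse of a coinvariant is coinvariant, so if the coinvariants of some
   compatible localization S^-1 E were identified with k[u, u^-1] extending
   i_U, then i_S(u) would have a coinvariant inverse, hence so would its
   conjugate g u g = 1 - u by the grouplike g.  Then 1 - u would be a unit of
   k[u, u^-1], which is false at u = 1. *)

Section Bilinear.
Variables (k : fieldType) (V W M : lmodType k) (f : V -> W -> M).
Hypothesis hf : bilin f.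

Lemma bilinD1 v1 v2 w : f (v1 + v2) w = f v1 w + f v2 w.
Proof. by have := hf.1 1 v1 v2 w; rewrite !scale1r. Qed.
Lemma bilin0l w : f 0 w = 0.
Proof. by apply: (addrI (f 0 w)); rewrite -bilinD1 !addr0. Qed.
Lemma bilinZ1 a v w : f (a *: v) w = a *: f v w.
Proof. by have := hf.1 a v 0 w; rewrite !addr0 bilin0l addr0. Qed.
Lemma bilinD2 v w1 w2 : f v (w1 + w2) = f v w1 + f v w2.
Proof. by have := hf.2 1 v w1 w2; rewrite !scale1r. Qed.
Lemma bilin0r v : f v 0 = 0.
Proof. by apply: (addrI (f v 0)); rewrite -bilinD2 !addr0. Qed.
Lemma bilinZ2 a v w : f v (a *: w) = a *: f v w.
Proof. by have := hf.2 a v w 0; rewrite !addr0 bilin0r addr0. Qed.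
End Bilinear.

Section Trilinear.
Variables (k : fieldType) (U V W M : lmodType k) (f : U -> V -> W -> M).
Hypothesis hf : trilin f.

Lemma trilin0l v w : f 0 v w = 0.
Proof.
case: hf => h _ _; apply: (addrI (f 0 v w)).
by have := h 1 0 0 v w; rewrite !scale1r !addr0.
Qed.
Lemma trilin0m u w : f u 0 w = 0.
Proof.
case: hf => _ h _; apply: (addrI (f u 0 w)).
by have := h 1 u 0 0 w; rewrite !scale1r !addr0.
Qed.
End Trilinear.

Section TensorEquality.
Variables (k : fieldType) (V W : lmodType k).
Implicit Types s t u : seq (V * W).

Lemma teq2_sym s t : teq2 s t -> teq2 t s.
Proof. by move=> H M f hf; rewrite H. Qed.
Lemma teq2_trans s t u : teq2 s t -> teq2 t u -> teq2 s u.
Proof. by move=> H1 H2 M f hf; rewrite H1 // H2. Qed.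

Lemma teq2_map1 (V' : lmodType k) (h : V -> V') s t :
  (forall (a : k) x y, h (a *: x + y) = a *: h x + h y) -> teq2 s t ->
  teq2 [seq (h p.1, p.2) | p <- s] [seq (h p.1, p.2) | p <- t].
Proof.
move=> lin_h H M f hf; rewrite !big_map.
apply: (H M (fun v w => f (h v) w)).
by split=> a x y z; [rewrite lin_h hf.1 | rewrite hf.2].
Qed.
End TensorEquality.

Section ComoduleAlgebra.
Variables (k : fieldType) (B : algType k) (D : B -> seq (B * B)) (eps : B -> k).
Variables (L : algType k) (rho : L -> seq (L * B)).
Hypothesis rho_comod : is_comod_alg D eps rho.

Definition tensor_mul (s t : seq (L * B)) := [seq (p.1 * q.1, p.2 * q.2) | p <- s, q <- t].

Lemma sum_tensor_mul (M : lmodType k) (f : L -> B -> M) s t :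
  \sum_(p <- tensor_mul s t) f p.1 p.2 = \sum_(p <- s) \sum_(q <- t) f (p.1 * q.1) (p.2 * q.2).
Proof. exact: big_allpairs_dep. Qed.

Lemma teq2_mull s s' t : teq2 s s' -> teq2 (tensor_mul s t) (tensor_mul s' t).
Proof.
move=> hs M f hf; rewrite !sum_tensor_mul.
apply: (hs M (fun a b => \sum_(q <- t) f (a * q.1) (b * q.2))).
split=> a x y z; rewrite scaler_sumr -big_split /=; apply: eq_bigr => q _.
  by rewrite mulrDl -scalerAl hf.1.
by rewrite mulrDl -scalerAl hf.2.
Qed.

Lemma teq2_mulr s t t' : teq2 t t' -> teq2 (tensor_mul s t) (tensor_mul s t').
Proof.
move=> ht M f hf; rewrite !sum_tensor_mul; apply: eq_bigr => p _.
apply: (ht M (fun a b => f (p.1 * a) (p.2 * b))).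
by split=> a x y z; rewrite mulrDr -scalerAr ?hf.1 ?hf.2.
Qed.

Lemma coinv1 : coinv rho 1.
Proof. by case: rho_comod. Qed.

Lemma coinvM x y : coinv rho x -> coinv rho y -> coinv rho (x * y).
Proof.
move=> hx hy; case: rho_comod => _ rhoM _ _ _.
apply: teq2_trans (rhoM x y) _.
apply: teq2_trans (teq2_mull (rho y) hx) _.
apply: teq2_trans (teq2_mulr [:: (x, 1)] hy) _.
by rewrite /tensor_mul /= mulr1.
Qed.

(* From [x z = 1] we get [(x (x) 1) rho(z) = 1 (x) 1]; multiplying the left
   tensor factor by [z] on the left gives [rho(z) = z (x) 1]. *)
Lemma coinv_inverse x z : coinv rho x -> z * x = 1 -> x * z = 1 -> coinv rho z.
Proof.
move=> hx zx xz; case: rho_comod => _ rhoM rho1 _ _.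
have h : teq2 (tensor_mul [:: (x, 1)] (rho z)) [:: (1, 1)].
  apply: teq2_trans _ rho1; rewrite -xz.
  apply: teq2_sym; apply: teq2_trans (rhoM x z) _.
  exact: teq2_mull.
move=> M f hf.
pose g a b := f (z * a) b.
have hg : bilin g.
  by split=> a u v w; [rewrite /g mulrDr -scalerAr hf.1 | rewrite /g hf.2].
have := h M g hg; rewrite sum_tensor_mul !big_cons !big_nil /g /= !addr0 mulr1.
by under eq_bigr do rewrite mulrA zx mul1r mul1r; move=> ->.
Qed.
End ComoduleAlgebra.

Lemma coinv_compatible (k : fieldType) (B : algType k) (D : B -> seq (B * B)) (eps : B -> k)
    (E L : algType k) (rho : E -> seq (E * B)) (iS : E -> L) (rhoS : L -> seq (L * B)) e :
  (forall (a : k) x y, iS (a *: x + y) = a *: iS x + iS y) ->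
  compatible_coaction D eps rho iS rhoS -> coinv rho e -> coinv rhoS (iS e).
Proof.
move=> lin_iS [_ compat] he; apply: teq2_trans (compat e) _.
exact: (teq2_map1 lin_iS he).
Qed.

Lemma alg_iso_on_unit (k : fieldType) (L : algType k) (A : comAlgType k) (V : L -> Prop)
    (zeta : L -> A) x w :
  V 1 -> (forall x y, V x -> V y -> V (x * y)) -> alg_iso_on V zeta ->
  V x -> zeta x * w = 1 -> exists y, [/\ V y, y * x = 1 & x * y = 1].
Proof.
move=> V1 VM [_ zetaM zeta1 zeta_inj zeta_onto] Vx xw.
have [y [Vy zy]] := zeta_onto w.
exists y; split=> //; apply: zeta_inj; rewrite ?zetaM ?zeta1 ?zy ?(mulrC w) //; exact: VM.
Qed.

Section Involution.
Variables (k : fieldType) (R : comAlgType k).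

Record involution := Involution {
  involf :> R -> R;
  involD : forall x y, involf (x + y) = involf x + involf y;
  involM : forall x y, involf (x * y) = involf x * involf y;
  invol1 : involf 1 = 1;
  involZ : forall (a : k) x, involf (a *: x) = a *: involf x;
  involK : forall x, involf (involf x) = x }.

Lemma invol0 (s : involution) : s 0 = 0.
Proof. by apply: (addrI (s 0)); rewrite -involD !addr0. Qed.

(* [Skew x y] stands for [x + y g] in the skew group algebra [R # Z/2] of the
   involution [s], where [g^2 = 1] and [g x = s(x) g]. *)
Record skewZ2 (s : involution) := Skew { skew1 : R; skewg : R }.

Definition skew_pair s (u : skewZ2 s) := (skew1 u, skewg u).
Definition pair_skew s (p : R * R) : skewZ2 s := Skew s p.1 p.2.
Lemma skew_pairK s : cancel (@skew_pair s) (@pair_skew s). Proof. by case. Qed.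
End Involution.
Arguments Skew {k R s}.

HB.instance Definition _ (k : fieldType) (R : comAlgType k) (s : involution R) :=
  Equality.copy (skewZ2 s) (can_type (@skew_pairK k R s)).
HB.instance Definition _ (k : fieldType) (R : comAlgType k) (s : involution R) :=
  Choice.copy (skewZ2 s) (can_type (@skew_pairK k R s)).

Section SkewLmodule.
Variables (k : fieldType) (R : comAlgType k) (s : involution R).
Local Notation T := (skewZ2 s).

Definition skew_add (u v : T) : T := Skew (skew1 u + skew1 v) (skewg u + skewg v).
Definition skew_opp (u : T) : T := Skew (- skew1 u) (- skewg u).
Definition skew_scale (a : k) (u : T) : T := Skew (a *: skew1 u) (a *: skewg u).

Lemma skew_addA : associative skew_add.
Proof. by case=> ? ? [? ?] [? ?]; rewrite /skew_add /= !addrA. Qed.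
Lemma skew_addC : commutative skew_add.
Proof. by case=> ? ? [? ?]; congr Skew; exact: addrC. Qed.
Lemma skew_add0 : left_id (Skew 0 0) skew_add.
Proof. by case=> ? ?; rewrite /skew_add /= !add0r. Qed.
Lemma skew_addN : left_inverse (Skew 0 0) skew_opp skew_add.
Proof. by case=> ? ?; rewrite /skew_add /= !addNr. Qed.

HB.instance Definition _ := GRing.isZmodule.Build T skew_addA skew_addC skew_add0 skew_addN.

Lemma skew_scaleA a b (v : T) : skew_scale a (skew_scale b v) = skew_scale (a * b) v.
Proof. by case: v => ? ?; rewrite /skew_scale /= !scalerA. Qed.
Lemma skew_scale1 : left_id 1 skew_scale.
Proof. by case=> ? ?; rewrite /skew_scale /= !scale1r. Qed.
Lemma skew_scaleDr : right_distributive skew_scale +%R.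
Proof. by move=> a [? ?] [? ?]; rewrite /skew_scale /= /skew_add /= !scalerDr. Qed.
Lemma skew_scaleDl v : {morph skew_scale^~ v : a b / a + b}.
Proof. by case: v => ? ? a b; rewrite /skew_scale /= /skew_add /= !scalerDl. Qed.

HB.instance Definition _ := GRing.Zmodule_isLmodule.Build k T
  skew_scaleA skew_scale1 skew_scaleDr skew_scaleDl.
End SkewLmodule.

Section SkewAlgebra.
Variables (k : fieldType) (R : comAlgType k) (s : involution R).
Local Notation T := (skewZ2 s).

Definition skew_mul (u v : T) : T :=
  Skew (skew1 u * skew1 v + skewg u * s (skewg v)) (skew1 u * skewg v + skewg u * s (skew1 v)).

Lemma skew_mulA : associative skew_mul.
Proof.
case=> a b [c d] [e f]; rewrite /skew_mul /=; congr Skew;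
  rewrite ?involD ?involM ?involK; move: (s c) (s d) (s e) (s f) => ? ? ? ?; ring.
Qed.
Lemma skew_mul1 : left_id (Skew 1 0) skew_mul.
Proof. by case=> a b; rewrite /skew_mul /= !mul1r !mul0r !addr0. Qed.
Lemma skew_mulr1 : right_id (Skew 1 0) skew_mul.
Proof. by case=> a b; rewrite /skew_mul /= invol0 invol1 !mulr1 !mulr0 addr0 add0r. Qed.
Lemma skew_mulDl : left_distributive skew_mul +%R.
Proof. by case=> a b [c d] [e f]; rewrite /skew_mul /skew_add /=; congr Skew; simpl; ring. Qed.
Lemma skew_mulDr : right_distributive skew_mul +%R.
Proof. by case=> a b [c d] [e f]; rewrite /skew_mul /skew_add /= !involD; congr Skew; simpl; ring. Qed.
Lemma skew_one_neq0 : Skew 1 0 != 0 :> T.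
Proof. by apply/eqP => -[] /eqP; rewrite oner_eq0. Qed.

HB.instance Definition _ := GRing.Zmodule_isNzRing.Build T
  skew_mulA skew_mul1 skew_mulr1 skew_mulDl skew_mulDr skew_one_neq0.

Lemma skew_scalerAl (a : k) (u v : T) : a *: (u * v) = (a *: u) * v.
Proof. by case: u v => x y [z w]; congr Skew; rewrite /= scalerDr !scalerAl. Qed.
Lemma skew_scalerAr (a : k) (u v : T) : a *: (u * v) = u * (a *: v).
Proof. by case: u v => x y [z w]; congr Skew; rewrite /= !involZ scalerDr !scalerAr. Qed.

HB.instance Definition _ := GRing.Lmodule_isLalgebra.Build k T skew_scalerAl.
HB.instance Definition _ := GRing.Lalgebra_isAlgebra.Build k T skew_scalerAr.

Lemma skew_ext (u v : T) : skew1 u = skew1 v -> skewg u = skewg v -> u = v.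
Proof. by case: u v => ? ? [? ?] /= -> ->. Qed.
End SkewAlgebra.

Section SkewCoaction.
Variable k : fieldType.

Definition id_involution : involution (k^o) :=
  @Involution k (k^o) idfun (fun _ _ => erefl) (fun _ _ => erefl) erefl
    (fun _ _ => erefl) (fun _ => erefl).

(* With the trivial involution, [skewZ2] is the group algebra k[Z/2]. *)
Definition kZ2 := skewZ2 id_involution.
Definition b1 : kZ2 := @Skew k (k^o) id_involution (1 : k) (0 : k).
Definition bg : kZ2 := @Skew k (k^o) id_involution (0 : k) (1 : k).
Definition kZ2_counit (b : kZ2) : k := skew1 b + skewg b.

Variables (R : comAlgType k) (s : involution R).
Local Notation T := (skewZ2 s).

Definition skew_coaction (u : T) : seq (T * kZ2) :=
  [:: (Skew (skew1 u) 0, b1); (Skew 0 (skewg u), bg)].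

(* Coordinates of a tensor in [T (x) kZ2 = (R + R g) (x) (k + k g)]. *)
Definition coef11 (l : seq (T * kZ2)) := \sum_(p <- l) (skew1 p.2 : k) *: skew1 p.1.
Definition coefg1 (l : seq (T * kZ2)) := \sum_(p <- l) (skew1 p.2 : k) *: skewg p.1.
Definition coef1g (l : seq (T * kZ2)) := \sum_(p <- l) (skewg p.2 : k) *: skew1 p.1.
Definition coefgg (l : seq (T * kZ2)) := \sum_(p <- l) (skewg p.2 : k) *: skewg p.1.

Section BilinearCoordinates.
Variables (M : lmodType k) (f : T -> kZ2 -> M).
Hypothesis hf : bilin f.

Lemma bilin_skew_pure u b : f u b =
    f (Skew ((skew1 b : k) *: skew1 u) 0) b1 + f (Skew 0 ((skew1 b : k) *: skewg u)) b1
  + f (Skew ((skewg b : k) *: skew1 u) 0) bg + f (Skew 0 ((skewg b : k) *: skewg u)) bg.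
Proof.
have Z1 (a : k) x : Skew (a *: x) 0 = a *: (Skew x 0 : T).
  by apply: skew_ext; rewrite /= ?scaler0.
have Zg (a : k) x : Skew 0 (a *: x) = a *: (Skew 0 x : T).
  by apply: skew_ext; rewrite /= ?scaler0.
have eu : u = Skew (skew1 u) 0 + Skew 0 (skewg u).
  by apply: skew_ext; rewrite /= ?addr0 ?add0r.
have eb : b = (skew1 b : k) *: b1 + (skewg b : k) *: bg.
  by apply: skew_ext; rewrite /= /GRing.scale /= ?mulr1 ?mulr0 ?addr0 ?add0r.
rewrite !Z1 !Zg !(bilinZ1 hf) {1}eb {1}eu (bilinD1 hf) !(bilinD2 hf) !(bilinZ2 hf).
by rewrite -!addrA; congr (_ + _); rewrite addrCA.
Qed.

Lemma bilin_skew_sum l : \sum_(p <- l) f p.1 p.2 =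
    f (Skew (coef11 l) 0) b1 + f (Skew 0 (coefg1 l)) b1
  + f (Skew (coef1g l) 0) bg + f (Skew 0 (coefgg l)) bg.
Proof.
have f1D b x y : f (Skew (x + y) 0) b = f (Skew x 0) b + f (Skew y 0) b.
  by rewrite -(bilinD1 hf); congr f; apply: skew_ext; rewrite /= ?addr0.
have fgD b x y : f (Skew 0 (x + y)) b = f (Skew 0 x) b + f (Skew 0 y) b.
  by rewrite -(bilinD1 hf); congr f; apply: skew_ext; rewrite /= ?addr0.
have f0 b : f (Skew 0 0) b = 0 by exact: (bilin0l hf).
rewrite (eq_bigr _ (fun p _ => bilin_skew_pure p.1 p.2)) !big_split /=.
rewrite /coef11 /coefg1 /coef1g /coefgg.
by rewrite !(big_morph _ (f1D _) (f0 _)) !(big_morph _ (fgD _) (f0 _)).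
Qed.
End BilinearCoordinates.

Lemma teq2_coef l l' : coef11 l = coef11 l' -> coefg1 l = coefg1 l' ->
  coef1g l = coef1g l' -> coefgg l = coefgg l' -> teq2 l l'.
Proof. by move=> e1 e2 e3 e4 M f hf; rewrite !(bilin_skew_sum hf) e1 e2 e3 e4. Qed.
End SkewCoaction.

Ltac coef_simpl := rewrite /coef11 /coefg1 /coef1g /coefgg ?big_cons ?big_nil /=
  ?mulr1 ?mulr0 ?mul1r ?mul0r ?addr0 ?add0r ?invol0 ?invol1
  ?scale1r ?scale0r ?scaler0 ?addr0 ?add0r ?mulr0 ?mul0r.

Section SkewComodule.
Variable k : fieldType.
Local Notation Delta := (@skew_coaction k _ (id_involution k)).
Variables (R : comAlgType k) (s : involution R).
Local Notation T := (skewZ2 s).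

Lemma skew_coaction_comod_alg : is_comod_alg Delta (@kZ2_counit k) (@skew_coaction _ _ s).
Proof.
split=> [a x y | x y | | e | e].
- by apply: teq2_coef; coef_simpl.
- by apply: teq2_coef; coef_simpl.
- by apply: teq2_coef; coef_simpl.
- move=> M f hf; rewrite !big_cons !big_nil /=.
  by rewrite !(trilin0l hf) !(trilin0m hf) !addr0 !add0r.
- by rewrite !big_cons big_nil; apply: skew_ext; coef_simpl;
    rewrite /kZ2_counit /= ?addr0 ?add0r scale1r.
Qed.

Lemma coinv_skew (e : T) : coinv (@skew_coaction _ _ s) e <-> skewg e = 0.
Proof.
split=> [coinv_e | e0]; last by apply: teq2_coef; coef_simpl; rewrite ?e0.
pose f (u : T) (b : kZ2 k) : T := (skewg b : k) *: u.
have hf : bilin f.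
  split=> a u v w; rewrite /f; first by rewrite scalerDr !scalerA mulrC.
  by rewrite /= scalerDl -scalerA.
have := coinv_e _ f hf; rewrite !big_cons !big_nil /f /= !scale0r !add0r scale1r addr0.
by move/(congr1 (@skewg _ _ _)).
Qed.
End SkewComodule.

Lemma kZ2_is_hopf (k : fieldType) :
  is_hopf (@skew_coaction k _ (id_involution k)) (@kZ2_counit k) id.
Proof.
have [Delta_lin Delta_mul Delta_1 coassoc counit] :=
  skew_coaction_comod_alg (id_involution k).
split; [by split | exact: coassoc | | |].
- split=> [a [x y] [z w] | [x y] [z w] |]; rewrite /kZ2_counit /= ?addr0 //.
  + by rewrite /GRing.scale /=; ring.
  + ring.
- move=> x; split; last exact: counit.
  by rewrite !big_cons big_nil; apply: skew_ext; coef_simpl;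
    rewrite /kZ2_counit /= ?addr0 ?add0r /GRing.scale /= mulr1.
- split=> // x; rewrite !big_cons !big_nil; split; apply: skew_ext;
    rewrite /kZ2_counit /= /GRing.scale /=; ring.
Qed.

Section SmashDecomposition.
Variables (k : fieldType) (R : comAlgType k) (s : involution R).
Local Notation T := (skewZ2 s).
Local Notation Delta := (@skew_coaction k _ (id_involution k)).
Local Notation V := (coinv (@skew_coaction _ _ s)).

(* Scalars are moved into [R] so that [ring] can close the goals below. *)
Definition k2R (a : k) : R := a%:A.
Lemma scaleE_k2R (a : k) (x : R) : a *: x = k2R a * x. Proof. by rewrite /k2R mulr_algl. Qed.
Lemma k2RD (a b : k) : k2R (a + b) = k2R a + k2R b. Proof. exact: scalerDl. Qed.
Lemma k2RM (a b : k) : k2R (a * b) = k2R a * k2R b.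
Proof. by rewrite /k2R mulr_algl scalerA. Qed.
Lemma k2R1 : k2R 1 = 1. Proof. exact: scale1r. Qed.
Lemma k2R0 : k2R 0 = 0. Proof. exact: scale0r. Qed.
Lemma invol_k2R (a : k) : s (k2R a) = k2R a. Proof. by rewrite /k2R involZ invol1. Qed.
Lemma scale_kZ2E (a : k) (x : k^o) : a *: x = a * x. Proof. by []. Qed.

Ltac scalars_to_R := do 2 rewrite /= ?scale_kZ2E ?scaleE_k2R ?k2RD ?k2RM ?k2R1 ?k2R0
   ?involD ?involM ?invol_k2R ?invol0 ?invol1 ?involK
   ?mulr0 ?mul0r ?addr0 ?add0r ?mul1r ?mulr1.

Definition skew_act (b : kZ2 k) (v : T) : T :=
  Skew ((skew1 b : k) *: skew1 v + (skewg b : k) *: s (skew1 v)) 0.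
Definition kZ2_embed (b : kZ2 k) : T := Skew ((skew1 b : k) *: 1) ((skewg b : k) *: 1).
Definition smash_map (v : T) (b : kZ2 k) : T := v * kZ2_embed b.

Lemma skew_act_module_alg : module_alg Delta (@kZ2_counit k) V skew_act.
Proof.
split=> [b v _ | a b1 b2 v _ | a b v1 v2 _ _ | b c v _ |]; first by apply/coinv_skew.
- by apply: skew_ext; rewrite /skew_act; scalars_to_R; ring.
- by apply: skew_ext; rewrite /skew_act; scalars_to_R; ring.
- by apply: skew_ext; rewrite /skew_act; scalars_to_R; ring.
split=> [v /coinv_skew v0 | b v w /coinv_skew v0 /coinv_skew w0 | b].
- by apply: skew_ext; rewrite /skew_act; scalars_to_R; rewrite ?v0 ?mul1r.
- rewrite !big_cons big_nil addr0.
  by apply: skew_ext; rewrite /skew_act; scalars_to_R; rewrite ?v0 ?w0; scalars_to_R; ring.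
- by apply: skew_ext; rewrite /skew_act /kZ2_counit; scalars_to_R; ring.
Qed.

Lemma smash_map_sum (l : seq (T * kZ2 k)) : (forall p, p \in l -> V p.1) ->
  [/\ \sum_(p <- l) smash_map p.1 p.2 = Skew (coef11 l) (coef1g l), coefg1 l = 0 & coefgg l = 0].
Proof.
elim: l => [|p l IH] Vl; first by rewrite /coef11 /coefg1 /coef1g /coefgg !big_nil.
have /coinv_skew p0 := Vl p (mem_head _ _).
have [e1 e2 e4] : [/\ \sum_(q <- l) smash_map q.1 q.2 = Skew (coef11 l) (coef1g l),
    coefg1 l = 0 & coefgg l = 0].
  by apply: IH => q lq; apply: Vl; rewrite inE lq orbT.
rewrite big_cons e1 /coef11 /coefg1 /coef1g /coefgg !big_cons.
rewrite -/(coef11 l) -/(coefg1 l) -/(coef1g l) -/(coefgg l) e2 e4 p0 !scaler0 !addr0.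
split=> //; apply: skew_ext; rewrite /smash_map /kZ2_embed; scalars_to_R; rewrite ?p0; scalars_to_R; ring.
Qed.

Lemma smash_map_iso : smash_iso Delta V (@skew_coaction _ _ s) skew_act smash_map.
Proof.
split.
- split=> [a v1 v2 b _ _ | a v b1 b2 _]; apply: skew_ext;
    rewrite /smash_map /kZ2_embed; scalars_to_R; ring.
- move=> e; exists [:: (Skew (skew1 e) 0, b1 k); (Skew (skewg e) 0, bg k)]; split.
    by move=> p; rewrite !inE => /orP[] /eqP -> /=; apply/coinv_skew.
  by rewrite !big_cons big_nil; apply: skew_ext; rewrite /smash_map /kZ2_embed; scalars_to_R; ring.
- move=> l t Vl Vt; have [-> e2 e4] := smash_map_sum Vl; have [-> f2 f4] := smash_map_sum Vt.
  by case=> e1 e3; apply: teq2_coef; rewrite ?e1 ?e3 ?e2 ?e4 ?f2 ?f4.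
- split.
  + move=> v b v' b' /coinv_skew v0 /coinv_skew v'0; rewrite !big_cons big_nil addr0.
    by apply: skew_ext; rewrite /smash_map /kZ2_embed /skew_act; scalars_to_R;
      rewrite ?v0 ?v'0; scalars_to_R; ring.
  + by apply: skew_ext; rewrite /smash_map /kZ2_embed; scalars_to_R.
- move=> v b /coinv_skew v0; apply: teq2_coef; coef_simpl;
    rewrite /smash_map /kZ2_embed; scalars_to_R; rewrite ?v0; scalars_to_R; ring.
Qed.
End SmashDecomposition.

Local Notation "x %:F" := (@tofrac _ x).

Section LaurentSubring.
Variable k : fieldType.
Local Notation Fk := {fraction {poly k}}.

Definition is_laurent (x : Fk) : bool :=
  boolp.asbool (exists n : nat, exists p : {poly k}, x * ('X^n)%:F = p%:F).

Lemma is_laurentP x :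
  reflect (exists n : nat, exists p : {poly k}, x * ('X^n)%:F = p%:F) (is_laurent x).
Proof. exact: boolp.asboolP. Qed.

Lemma is_laurent_poly (p : {poly k}) : is_laurent (p%:F).
Proof. by apply/is_laurentP; exists 0%N, p; rewrite expr0 tofrac1 mulr1. Qed.

Lemma is_laurent_subring_closed : subring_closed is_laurent.
Proof.
split; first exact: is_laurent_poly.
- move=> x y /is_laurentP[n [p Hp]] /is_laurentP[m [q Hq]]; apply/is_laurentP.
  exists (n + m)%N, (p * 'X^m - q * 'X^n).
  rewrite tofracB !tofracM -Hp -Hq exprD tofracM; ring.
- move=> x y /is_laurentP[n [p Hp]] /is_laurentP[m [q Hq]]; apply/is_laurentP.
  exists (n + m)%N, (p * q).
  by rewrite tofracM -Hp -Hq exprD tofracM mulrACA.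
Qed.

Record laurent := Laurent { lval : Fk; lvalP : is_laurent lval }.
End LaurentSubring.

HB.instance Definition _ k := [isSub for @lval k].
HB.instance Definition _ k := [Choice of laurent k by <:].
HB.instance Definition _ k :=
  GRing.SubChoice_isSubComNzRing.Build _ _ (laurent k) (@is_laurent_subring_closed k).

Section LaurentAlgebra.
Variable k : fieldType.
Local Notation L := (laurent k).

Definition laurent_poly (p : {poly k}) : L := Laurent (is_laurent_poly p).

Lemma laurent_polyD p q : laurent_poly (p + q) = laurent_poly p + laurent_poly q.
Proof. by apply: val_inj; rewrite /= tofracD. Qed.
Lemma laurent_polyM p q : laurent_poly (p * q) = laurent_poly p * laurent_poly q.
Proof. by apply: val_inj; rewrite /= tofracM. Qed.
Lemma laurent_poly1 : laurent_poly 1 = 1.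
Proof. by apply: val_inj; rewrite /= tofrac1. Qed.

Definition laurent_scale (a : k) (x : L) : L := laurent_poly a%:P * x.

Lemma laurent_scaleA a b v : laurent_scale a (laurent_scale b v) = laurent_scale (a * b) v.
Proof. by rewrite /laurent_scale polyCM laurent_polyM mulrA. Qed.
Lemma laurent_scale1 : left_id 1 laurent_scale.
Proof. by move=> x; rewrite /laurent_scale laurent_poly1 mul1r. Qed.
Lemma laurent_scaleDr : right_distributive laurent_scale +%R.
Proof. by move=> a x y; rewrite /laurent_scale mulrDr. Qed.
Lemma laurent_scaleDl v : {morph laurent_scale^~ v : a b / a + b}.
Proof. by move=> a b; rewrite /laurent_scale polyCD laurent_polyD mulrDl. Qed.

HB.instance Definition _ := GRing.Zmodule_isLmodule.Build k L
  laurent_scaleA laurent_scale1 laurent_scaleDr laurent_scaleDl.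

Lemma laurent_scalerAl (a : k) (u v : L) : a *: (u * v) = (a *: u) * v.
Proof. exact: mulrA. Qed.

HB.instance Definition _ := GRing.Lmodule_isLalgebra.Build k L laurent_scalerAl.
HB.instance Definition _ := GRing.Lalgebra_isComAlgebra.Build k L.

(* Evaluating [(1 - X) p = X^n] at [X = 1] gives [0 = 1]. *)
Lemma laurent_one_subX_nonunit (w : L) : laurent_poly (1 - 'X) * w != 1.
Proof.
apply/eqP => /(congr1 (@lval k)) /= unit_w; have /is_laurentP [n [p wXn]] := lvalP w.
have : (1 - 'X) * p = 'X^n.
  by apply/eqP; rewrite -tofrac_eq tofracM -wXn mulrA unit_w mul1r.
move/(congr1 (horner^~ 1))/eqP; rewrite !hornerE expr1n subrr mul0r eq_sym.
by rewrite oner_eq0.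
Qed.
End LaurentAlgebra.

Lemma involutive_conj_inverse (R : ringType) (g a b y : R) :
  g * g = 1 -> g * b = a * g -> y * a = 1 -> a * y = 1 ->
  g * y * g * b = 1 /\ b * (g * y * g) = 1.
Proof.
move=> gg gb ya ay; have -> : b = g * a * g by rewrite -mulrA -gb mulrA gg mul1r.
split; first by rewrite !mulrA -(mulrA _ g g) gg mulr1 -(mulrA _ y a) ya mulr1.
by rewrite !mulrA -(mulrA _ g g) gg mulr1 -(mulrA _ a y) ay mulr1.
Qed.

Section FlipExample.
Variable k : fieldType.

Definition flip_poly (p : {poly k}) := p \Po (1 - 'X).

Lemma flip_polyK : involutive flip_poly.
Proof.
move=> p; rewrite /flip_poly -comp_polyA comp_polyB comp_polyX -polyC1 comp_polyC polyC1.
by rewrite opprB addrC subrK comp_polyXr.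
Qed.

Lemma flip_poly0 : flip_poly 0 = 0. Proof. exact: comp_poly0. Qed.
Lemma flip_poly1 : flip_poly 1 = 1. Proof. by rewrite /flip_poly -polyC1 comp_polyC. Qed.
Lemma flip_poly_one_subX : flip_poly (1 - 'X) = 'X.
Proof. by rewrite -[in RHS](flip_polyK 'X) /flip_poly comp_polyX. Qed.

Definition flip_involution : involution {poly k} :=
  @Involution k {poly k} flip_poly (fun p q => comp_polyD p q _) (fun p q => comp_polyM p q _)
    flip_poly1 (fun a p => comp_polyZ a p _) flip_polyK.

Definition Eflip := skewZ2 flip_involution.
Local Notation VE := (coinv (@skew_coaction k _ flip_involution)).

Definition iU (e : Eflip) : laurent k := laurent_poly (skew1 e).
Definition powers_u (e : Eflip) : Prop := exists n : nat, e = Skew ('X^n) 0.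

Lemma coinv_Eflip_comm : commutative_on VE.
Proof.
move=> x y /coinv_skew x0 /coinv_skew y0; apply: skew_ext; rewrite /= x0 y0.
  by rewrite !mul0r !addr0 mulrC.
by rewrite !mul0r !mulr0 !addr0.
Qed.

Lemma coinv_Eflip_poly_iso : poly_iso VE.
Proof.
exists (fun p => Skew p 0 : Eflip); split=> [a p q | p q | | p q [] // | e].
- by apply: skew_ext; rewrite /= ?scaler0 ?addr0.
- by apply: skew_ext; rewrite /= ?mulr0 ?mul0r ?addr0.
- by [].
split=> [/coinv_skew e0 | [p ->]]; last exact/coinv_skew.
by exists (skew1 e); apply: skew_ext.
Qed.

Lemma powers_u_mult_subset : mult_subset VE powers_u.
Proof.
split=> [u [n ->] | | x y [n ->] [m ->]]; first exact/coinv_skew.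
  by exists 0%N; rewrite expr0.
by exists (n + m)%N; apply: skew_ext; rewrite /= ?mul0r ?mulr0 ?addr0 ?exprD.
Qed.

Lemma iU_localization : comm_localization VE powers_u iU.
Proof.
have Xn_neq0 n : (('X^n : {poly k})%:F) != 0 by rewrite tofrac_eq0 expf_neq0 ?polyX_eq0.
split=> [a x y _ _ | x y /coinv_skew x0 /coinv_skew y0 | | u [n ->] |].
- by apply: val_inj; rewrite /= -mul_polyC tofracD tofracM.
- by apply: val_inj; rewrite /= x0 y0 mul0r addr0 tofracM.
- by apply: val_inj; rewrite /= tofrac1.
- have Xn_inv : is_laurent ((('X^n : {poly k})%:F)^-1).
    by apply/is_laurentP; exists n, 1; rewrite mulVf ?Xn_neq0 // tofrac1.
  by exists (Laurent Xn_inv); apply: val_inj; rewrite /= mulfV.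
split=> [l | v /coinv_skew v0].
  have /is_laurentP [n [p lXn]] := lvalP l.
  exists (Skew p 0 : Eflip), (Skew ('X^n) 0 : Eflip); split; first exact/coinv_skew.
    by exists n.
  exact: val_inj.
split=> [/(congr1 (@lval k)) /eqP | [u [[n ->]]] /(congr1 (@skew1 _ _ _)) /= /eqP].
  rewrite tofrac_eq0 => /eqP v1; exists 1; split; first by exists 0%N; rewrite expr0.
  by apply: skew_ext; rewrite /= v1 v0 !mul0r !mulr0 !addr0.
rewrite v0 mul0r addr0 mulf_eq0 expf_eq0 polyX_eq0 andbF /= => /eqP v1.
by apply: val_inj; rewrite /= v1 tofrac0.
Qed.

Definition uE : Eflip := Skew 'X 0.
Definition one_sub_uE : Eflip := Skew (1 - 'X) 0.
Definition gE : Eflip := Skew 0 1.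

Lemma gE_sq : gE * gE = 1.
Proof. by apply: skew_ext; rewrite /= ?flip_poly0 ?flip_poly1 ?mul0r ?mul1r ?add0r ?addr0. Qed.

Lemma gE_one_sub_uE : gE * one_sub_uE = uE * gE.
Proof.
by apply: skew_ext; rewrite /= ?flip_poly0 ?flip_poly1 ?flip_poly_one_subX ?mul0r ?mulr0 ?mul1r ?mulr1 ?add0r ?addr0.
Qed.
End FlipExample.

Section Obstruction.
Variable k : fieldType.
Local Notation Delta := (@skew_coaction k _ (id_involution k)).
Local Notation rhoE := (@skew_coaction k _ (flip_involution k)).
Local Notation VE := (coinv rhoE).

Lemma no_compatible_localization :
  ~ exists (S' : Eflip k -> Prop) (L : algType k) (iS : Eflip k -> L)
      (rhoS : L -> seq (L * kZ2 k)) (zeta : L -> laurent k),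
    [/\ left_ore S', left_fractions S' iS, rho_compatible Delta (@kZ2_counit k) rhoE iS,
        compatible_coaction Delta (@kZ2_counit k) rhoE iS rhoS &
        alg_iso_on (coinv rhoS) zeta /\ (forall v, VE v -> zeta (iS v) = iU v)].
Proof.
case=> S' [L [iS [rhoS [zeta [_ [iS_lin iS_mul iS_1 _ _] _ compat [zeta_iso zeta_iU]]]]]].
have rhoS_comod := compat.1; have [_ zetaM zeta1 _ _] := zeta_iso.
have coinv_iS e : VE e -> coinv rhoS (iS e) by exact: coinv_compatible iS_lin compat.
have [y [_ yu uy]] : exists y, [/\ coinv rhoS y, y * iS (uE k) = 1 & iS (uE k) * y = 1].
  have [_ _ _ iU_unit _] := iU_localization k.
  have [w uw] : exists w, iU (uE k) * w = 1 by apply: iU_unit; exists 1%N; rewrite expr1.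
  have Vu : VE (uE k) by apply/coinv_skew.
  apply: (alg_iso_on_unit (coinv1 rhoS_comod) (coinvM rhoS_comod) zeta_iso (coinv_iS _ Vu)).
  by rewrite zeta_iU //; exact: uw.
have gg : iS (gE k) * iS (gE k) = 1 by rewrite -iS_mul gE_sq iS_1.
have gv : iS (gE k) * iS (one_sub_uE k) = iS (uE k) * iS (gE k).
  by rewrite -!iS_mul gE_one_sub_uE.
set z := iS (gE k) * y * iS (gE k).
have [zv vz] := involutive_conj_inverse gg gv yu uy.
have Vv : VE (one_sub_uE k) by apply/coinv_skew.
have Vz : coinv rhoS z := coinv_inverse rhoS_comod (coinv_iS _ Vv) zv vz.
have v_unit : iU (one_sub_uE k) * zeta z = 1.
  by rewrite -zeta_iU // -zetaM ?vz ?zeta1 //; exact: coinv_iS.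
by move/eqP: v_unit; apply/negP/laurent_one_subX_nonunit.
Qed.
End Obstruction.

Theorem theorem5 (k : fieldType) :
  exists (B : algType k) (D : B -> seq (B * B)) (eps : B -> k) (S : B -> B),
    is_hopf D eps S /\
    exists (E : algType k) (rho : E -> seq (E * B)),
      [/\ is_comod_alg D eps rho,
          commutative_on (coinv rho) /\ poly_iso (coinv rho),
          smash_decomposition D eps (coinv rho) rho &
          exists U : E -> Prop, mult_subset (coinv rho) U /\
            exists (Lu : comAlgType k) (iU : E -> Lu),
              comm_localization (coinv rho) U iU /\
              ~ exists (S' : E -> Prop) (L : algType k) (iS : E -> L)
                       (rhoS : L -> seq (L * B)) (zeta : L -> Lu),
                  [/\ left_ore S', left_fractions S' iS,
                      rho_compatible D eps rho iS,
                      compatible_coaction D eps rho iS rhoS &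
                      alg_iso_on (coinv rhoS) zeta /\
                      (forall v, coinv rho v -> zeta (iS v) = iU v)]].
Proof.
exists (kZ2 k), (@skew_coaction k _ (id_involution k)), (@kZ2_counit k), id.
split; first exact: kZ2_is_hopf.
exists (Eflip k), (@skew_coaction k _ (flip_involution k)); split.
- exact: skew_coaction_comod_alg.
- split; [exact: coinv_Eflip_comm | exact: coinv_Eflip_poly_iso].
- exists (@skew_act k _ (flip_involution k)); split; first exact: skew_act_module_alg.
  by exists (@smash_map k _ (flip_involution k)); exact: smash_map_iso.
- exists (@powers_u k); split; first exact: powers_u_mult_subset.
  exists (laurent k), (@iU k); split; first exact: iU_localization.
  exact: no_compatible_localization.
Qed.
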